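(* Let $M$ be a matroid on $E=\{1,\dots,n\}$ such that $E$ admits a good partition $(E_1,E_2)$ with respect to $M$, and let $M'$ be a relaxation of $M$. Then $P(M')$ has a nontrivial hyperplane split.
   Context: A relaxation of $M$ is the matroid $M'$ on $E$ with $\mathcal{B}(M')=\mathcal{B}(M)\cup\{X\}$, where $X\subseteq E$ is a set that is both a circuit and a hyperplane (closed set of rank $r-1$) of $M$, $r$ the rank of $M$. For a matroid $N$ on $E$, $P(N)=\mathrm{conv}\{\sum_{i\in B}e_i : B\in\mathcal{B}(N)\}\subset\mathbb{R}^n$. A hyperplane split of $P(N)$ is an expression $P(N)=P(N_1)\cup P(N_2)$ with $N_1,N_2$ matroids on $E$ such that $P(N_1)\cap P(N_2)$ is a face of both; it is nontrivial if $P(N_1)\neq P(N)\neq P(N_2)$. For $A\subseteq E$, $M|_A$ is the restriction, $\mathcal{I}(\cdot)$ the independent sets. A partition $(E_1,E_2)$ of $E$ with $r_i$ the rank of $M|_{E_i}$ and $r_i>1$ is a good partition if there exist integers $0<a_1<r_1$, $0<a_2<r_2$ with (P1) $r_1+r_2=r+a_1+a_2$ and (P2) for every $X\in\mathcal{I}(M|_{E_1})$ with $|X|\le r_1-a_1$ and every $Y\in\mathcal{I}(M|_{E_2})$ with $|Y|\le r_2-a_2$, $X\cup Y\in\mathcal{I}(M)$. *)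

From HB Require Import structures.
From mathcomp Require Import all_boot all_order all_algebra.
Set Implicit Arguments. Unset Strict Implicit. Unset Printing Implicit Defensive.
Import Order.TTheory GRing.Theory Num.Theory.

(* A matroid on E = 'I_n (= {1,...,n} up to relabelling) is given by its
   family of bases B : {set {set 'I_n}}. *)
Definition is_matroid (n : nat) (B : {set {set 'I_n}}) : Prop :=
  B != set0 /\
  forall B1 B2, B1 \in B -> B2 \in B -> forall x, x \in B1 :\: B2 ->
    exists2 y, y \in B2 :\: B1 & (y |: (B1 :\ x)) \in B.

Definition indep (n : nat) (B : {set {set 'I_n}}) (X : {set 'I_n}) : bool :=
  [exists Y in B, X \subset Y].

Definition rk (n : nat) (B : {set {set 'I_n}}) (A : {set 'I_n}) : nat :=
  \max_(X : {set 'I_n} | indep B X && (X \subset A)) #|X|.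

Definition mrank (n : nat) (B : {set {set 'I_n}}) : nat := rk B setT.

Definition circuit (n : nat) (B : {set {set 'I_n}}) (C : {set 'I_n}) : bool :=
  ~~ indep B C && [forall x in C, indep B (C :\ x)].

Definition closed_set (n : nat) (B : {set {set 'I_n}}) (X : {set 'I_n}) : bool :=
  [forall x in ~: X, rk B X < rk B (x |: X)].

Definition hyperplane (n : nat) (B : {set {set 'I_n}}) (X : {set 'I_n}) : bool :=
  closed_set B X && (rk B X == (mrank B).-1).

Definition circuit_hyperplane (n : nat) (B : {set {set 'I_n}}) (X : {set 'I_n}) :=
  circuit B X && hyperplane B X.

Definition relaxation (n : nat) (B : {set {set 'I_n}}) (X : {set 'I_n}) :
  {set {set 'I_n}} := X |: B.

Definition good_partition (n : nat) (B : {set {set 'I_n}}) (E1 E2 : {set 'I_n}) : Prop :=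
  E1 :|: E2 = setT /\ E1 :&: E2 = set0 /\
  1 < rk B E1 /\ 1 < rk B E2 /\
  exists a1 a2 : nat,
    [/\ 0 < a1 < rk B E1, 0 < a2 < rk B E2,
        rk B E1 + rk B E2 = mrank B + a1 + a2 &
        forall X Y : {set 'I_n},
          indep B X -> X \subset E1 -> #|X| <= rk B E1 - a1 ->
          indep B Y -> Y \subset E2 -> #|Y| <= rk B E2 - a2 ->
          indep B (X :|: Y)].

Local Open Scope ring_scope.

Definition point (R : realFieldType) (n : nat) := 'I_n -> R.

Definition mpolytope (R : realFieldType) (n : nat) (B : {set {set 'I_n}})
  (x : point R n) : Prop :=
  exists lam : {set 'I_n} -> R,
    [/\ forall S, 0 <= lam S,
        \sum_(S in B) lam S = 1 &
        forall i, x i = \sum_(S in B) lam S * (i \in S)%:R].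

Arguments mpolytope R {n} B x.

Definition set_eq (R : realFieldType) (n : nat) (P Q : point R n -> Prop) :=
  forall x, P x <-> Q x.

(* F is a face of the polytope P: the intersection of P with a supporting
   hyperplane {a.x = b} where a.x <= b on P (a = 0, b = 0 gives P itself). *)
Definition face (R : realFieldType) (n : nat) (F P : point R n -> Prop) : Prop :=
  exists (a : 'I_n -> R) (b : R),
    (forall x, P x -> \sum_i a i * x i <= b) /\
    (forall x, F x <-> (P x /\ \sum_i a i * x i = b)).

Definition has_nontrivial_hyperplane_split (R : realFieldType) (n : nat)
  (B : {set {set 'I_n}}) : Prop :=
  exists B1 B2 : {set {set 'I_n}},
    [/\ is_matroid B1, is_matroid B2,
        set_eq (mpolytope R B) (fun x => mpolytope R B1 x \/ mpolytope R B2 x),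
        face (fun x => mpolytope R B1 x /\ mpolytope R B2 x) (mpolytope R B1) &
        face (fun x => mpolytope R B1 x /\ mpolytope R B2 x) (mpolytope R B2)] /\
    ~ set_eq (mpolytope R B1) (mpolytope R B) /\
    ~ set_eq (mpolytope R B2) (mpolytope R B).

From HB Require Import structures.
From mathcomp Require Import all_boot all_order all_algebra zify lra.
Set Implicit Arguments. Unset Strict Implicit. Unset Printing Implicit Defensive.

(* We split P(M') along the
   hyperplane  sum_(i in X) x_i = r - 1.
   - Every basis of M meets X in at most r - 1 elements (X has rank r - 1),
     so P(M) lies below the hyperplane.
   - The sets of size r meeting X in at least r - 1 elements form a matroid
     N (near_family X); its bases are X and the swaps X - z + y, which are
     bases of M, and P(N) lies above the hyperplane.
   - P(M') = P(M) u P(N): if a convex combination of bases of M' uses both X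
     and a basis B0 meeting X in fewer than r - 1 elements, exchange gives
     bases C1, C2 with 1_X + 1_B0 = 1_C1 + 1_C2, and weight can be shifted
     onto them until X or every such B0 drops out (normal_form).
   - P(M) and P(N) meet in the face cut out by the hyperplane on each side.
   - The split is nontrivial: the vertex 1_X is not in P(M), and a good
     partition forces a basis far from X, whose vertex is not in P(N). *)

Section MatroidBasics.
Variables (n : nat) (B : {set {set 'I_n}}).
Hypothesis matB : is_matroid B.
Local Notation r := (mrank B).
Implicit Types I J S T A : {set 'I_n}.

Lemma indep_sub I J : indep B J -> I \subset J -> indep B I.
Proof.
case/existsP=> Y /andP[YB JY] IJ; apply/existsP; exists Y.
by rewrite YB (subset_trans IJ JY).
Qed.

Lemma basis_indep S : S \in B -> indep B S.
Proof. by move=> SB; apply/existsP; exists S; rewrite SB subxx. Qed.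

Lemma indep0 : indep B set0.
Proof. by case: matB => /set0Pn[S SB] _; apply: indep_sub (basis_indep SB) (sub0set S). Qed.

(* Exchanging an element of S1 \ S2 for one of S2 \ S1 keeps the size and
   shrinks S1 \ S2, so all bases have the same cardinality. *)
Lemma bases_card S1 S2 : S1 \in B -> S2 \in B -> #|S1| = #|S2|.
Proof.
case: matB => _ exch S1B S2B; have [k] := ubnP #|S1 :\: S2|.
elim: k S1 S1B => // k IH S1 S1B ltk.
have [S12|/set0Pn[x xD]] := eqVneq (S1 :\: S2) set0.
  have S21 : S2 :\: S1 = set0.
    apply/eqP/set0Pn=> -[y yD]; have [z] := exch S2 S1 S2B S1B y yD.
    by rewrite S12 inE.
  suff -> : S1 = S2 by [].
  by apply/eqP; rewrite eqEsubset -!setD_eq0 S12 S21 eqxx.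
have [y yD yB] := exch S1 S2 S1B S2B x xD.
move: xD yD; rewrite !inE => /andP[xS2 xS1] /andP[yS1 yS2].
have card_swap : #|y |: (S1 :\ x)| = #|S1|.
  by rewrite cardsU1 in_setD1 (negbTE yS1) andbF (cardsD1 x S1) xS1.
rewrite -card_swap; apply: IH => //.
have -> : (y |: (S1 :\ x)) :\: S2 = (S1 :\: S2) :\ x.
  apply/setP=> i; rewrite !inE; case: eqVneq => [->|_] /=.
    by rewrite yS2 (negbTE yS1) !andbF.
  by rewrite andbCA.
by move: ltk; rewrite (cardsD1 x (S1 :\: S2)) !inE xS1 xS2.
Qed.

Lemma indep_le_rk I A : indep B I -> I \subset A -> #|I| <= rk B A.
Proof.
move=> iI IA; rewrite /rk.
by apply: (@leq_bigmax_cond _ (fun X => indep B X && (X \subset A))); rewrite iI IA.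
Qed.

Lemma rk_le A k : (forall I, indep B I -> I \subset A -> #|I| <= k) -> rk B A <= k.
Proof. by move=> H; apply/bigmax_leqP=> I /andP[]; apply: H. Qed.

Lemma rk_witness A : exists2 I, indep B I && (I \subset A) & #|I| = rk B A.
Proof.
have ne : 0 < #|[pred X : {set 'I_n} | indep B X && (X \subset A)]|.
  by apply/card_gt0P; exists set0; rewrite inE indep0 sub0set.
have [I IA rkE] := eq_bigmax_cond (fun X : {set 'I_n} => #|X|) ne.
by exists I; rewrite // /rk rkE.
Qed.

Lemma basis_card S : S \in B -> #|S| = r.
Proof.
move=> SB; apply/eqP; rewrite eqn_leq indep_le_rk ?basis_indep ?subsetT //=.
apply: rk_le => I /existsP[Y /andP[YB IY]] _.
by rewrite (bases_card SB YB) subset_leq_card.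
Qed.

Lemma indep_card I : indep B I -> #|I| <= r.
Proof. by move=> iI; apply: indep_le_rk iI (subsetT I). Qed.

Lemma rk_le_r A : rk B A <= r.
Proof. by apply: rk_le => I iI _; apply: indep_card. Qed.

Lemma indep_full I : indep B I -> r <= #|I| -> I \in B.
Proof.
case/existsP=> Y /andP[YB IY] le.
suff -> : I = Y by [].
by apply/eqP; rewrite eqEcard IY (basis_card YB).
Qed.

Lemma rk_lt_dep A : ~~ indep B A -> rk B A < #|A|.
Proof.
move=> depA; have [I /andP[iI IA] cI] := rk_witness A.
rewrite ltnNge; apply: contra depA => le.
suff <- : I = A by [].
by apply/eqP; rewrite eqEcard IA cI.
Qed.

Lemma basis_add_one S T : 0 < r -> S \in B -> T \subset S -> #|T| = r.-1 ->
  exists2 u, u \notin T & S = u |: T.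
Proof.
move=> r_gt0 SB TS cT.
have /cards1P[u Su] : #|S :\: T| == 1.
  by rewrite cardsD (setIidPr TS) cT (basis_card SB); apply/eqP; lia.
have : u \in S :\: T by rewrite Su set11.
rewrite inE => /andP[uT uS]; exists u => //.
apply/setP=> i; rewrite in_setU1; case: eqVneq => [->|neq] //=.
case iT: (i \in T); first by rewrite (subsetP TS).
apply/negbTE; apply: contra neq => iS.
have : i \in S :\: T by rewrite inE iT iS.
by rewrite Su inE.
Qed.
End MatroidBasics.

Lemma swap_shape (T : finType) (X S : {set T}) :
  0 < #|X| -> #|S| = #|X| -> #|S :&: X| = #|X|.-1 ->
  exists u v, [/\ u \notin X, v \in X & S = u |: (X :\ v)].
Proof.
move=> X_gt0 cS cSX.
have /cards1P[u Su] : #|S :\: X| == 1 by rewrite cardsD cS cSX; apply/eqP; lia.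
have /cards1P[v Xv] : #|X :\: S| == 1 by rewrite cardsD setIC cSX; apply/eqP; lia.
have hu i : (i \notin X) && (i \in S) = (i == u) by rewrite -in_setD Su inE.
have hv i : (i \notin S) && (i \in X) = (i == v) by rewrite -in_setD Xv inE.
exists u, v; split; first by have := hu u; rewrite eqxx => /andP[].
  by have := hv v; rewrite eqxx => /andP[].
apply/setP=> i; rewrite in_setU1 in_setD1.
by move: (hu i) (hv i); case: (i \in S); case: (i \in X) => /= <- <-.
Qed.

Definition near_family n (X : {set 'I_n}) : {set {set 'I_n}} :=
  [set S : {set 'I_n} | (#|S| == #|X|) && (#|X|.-1 <= #|S :&: X|)].

(* To exchange x in B1 \ B2, any element
   of B2 \ B1 will do unless x lies in X and B1 misses a point z of X; then
   z is in B2 (which contains X - x) and is the element to bring in. *)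
Lemma near_family_matroid n (X : {set 'I_n}) : is_matroid (near_family X).
Proof.
split; first by apply/set0Pn; exists X; rewrite inE eqxx setIid leq_pred.
move=> B1 B2; rewrite !inE => /andP[/eqP c1 h1] /andP[/eqP c2 h2] x.
rewrite inE => /andP[xB2 xB1].
have swap_in y : y \notin B1 -> #|X|.-1 <= #|(y |: B1 :\ x) :&: X| ->
    y |: B1 :\ x \in near_family X.
  move=> yB1 h; rewrite inE h andbT cardsU1 in_setD1 (negbTE yB1) andbF.
  by have := cardsD1 x B1; rewrite xB1 c1 => ->.
have base y : (B1 :\ x) :&: X \subset (y |: B1 :\ x) :&: X.
  by apply: setSI; apply: subsetUr.
have cB1x : #|(B1 :\ x) :&: X| + (x \in X) = #|B1 :&: X|.
  by rewrite setIDAC (cardsD1 x (B1 :&: X)) inE xB1 addnC.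
have [/andP[xX /subsetPn[z zX zB1]] | easy] := boolP ((x \in X) && ~~ (X \subset B1)).
  have zB2 : z \in B2.
    apply: contraT => zB2; have zx : z != x by apply: contraNneq zB1 => ->.
    have : B2 :&: X \subset (X :\ x) :\ z.
      apply/subsetP=> i; rewrite !inE => /andP[iB2 ->]; rewrite andbT.
      by apply/andP; split; apply/eqP => ei; [move: zB2 | move: xB2]; rewrite -ei iB2.
    move/subset_leq_card; have := cardsD1 z (X :\ x); have := cardsD1 x X.
    by rewrite !inE zx zX xX; move: h2; lia.
  exists z; first by rewrite inE zB1 zB2.
  apply: swap_in => //; apply: leq_trans h1 _; rewrite -cB1x xX addn1.
  have <- : #|z |: ((B1 :\ x) :&: X)| = #|(B1 :\ x) :&: X|.+1.
    by rewrite cardsU1 !inE (negbTE zB1) andbF.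
  apply: subset_leq_card; apply/subsetP=> i; rewrite !inE.
  by case: eqVneq => [->|] //=; rewrite zX.
have [y yD] : exists y, y \in B2 :\: B1.
  apply/set0Pn; rewrite -card_gt0 cardsD c2 setIC.
  have : 0 < #|B1 :\: B2| by apply/card_gt0P; exists x; rewrite inE xB1 xB2.
  by rewrite cardsD c1; lia.
exists y => //; apply: swap_in; first by move: yD; rewrite inE => /andP[].
apply: leq_trans (subset_leq_card (base y)).
move: easy cB1x; case: (x \in X) => /=; last by move=> _; rewrite addn0 => ->.
by move=> /negbNE/setIidPl XB1; rewrite [B1 :&: X]setIC XB1 => <-; rewrite addn1.
Qed.

Lemma swap_pair_multiset (T : finType) (X B0 : {set T}) y z i :
  y \in B0 :\: X -> z \in X :\: B0 ->
  (i \in y |: (X :\ z)) + (i \in z |: (B0 :\ y)) = (i \in X) + (i \in B0).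
Proof.
rewrite !inE => /andP[yX yB0] /andP[zB0 zX].
have yz : (y == z) = false by apply: contraNF yX => /eqP->.
have [->|iy] := eqVneq i y; first by rewrite /= yz (negbTE yX) yB0.
have [->|iz] := eqVneq i z; first by rewrite zX (negbTE zB0).
by rewrite addnC.
Qed.

Lemma basis_in_relaxation n (B : {set {set 'I_n}}) (X S : {set 'I_n}) :
  S \in B -> S \in relaxation B X.
Proof. by move=> SB; rewrite in_setU1 SB orbT. Qed.

Section CircuitHyperplane.
Variables (n : nat) (B : {set {set 'I_n}}) (X : {set 'I_n}).
Hypotheses (matB : is_matroid B) (chX : circuit_hyperplane B X).
Local Notation r := (mrank B).
Hypothesis r_gt0 : 0 < r.
Implicit Types S T : {set 'I_n}.

Lemma X_dep : ~~ indep B X.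
Proof. by case/andP: chX => /andP[]. Qed.

Lemma X_notin_B : X \notin B.
Proof. by apply: contra X_dep; apply: basis_indep. Qed.

Lemma proper_X_indep T : T \proper X -> indep B T.
Proof.
case/properP=> TX [e eX eT].
have iXe : indep B (X :\ e) by case/andP: chX => /andP[_ /forallP/(_ e)/implyP/(_ eX)].
apply: indep_sub iXe _.
by apply/subsetP=> i iT; rewrite in_setD1 (subsetP TX) // andbT; apply: contraNneq eT => <-.
Qed.

Lemma rk_X : rk B X = r.-1.
Proof. by case/andP: chX => _ /andP[_ /eqP]. Qed.

(* X is dependent of rank r - 1 while X - x is independent: |X| = r. *)
Lemma card_X : #|X| = r.
Proof.
have /set0Pn[x xX] : X != set0 by apply: contraNneq X_dep => ->; apply: indep0.
have Xx : X :\ x \proper X by rewrite properD1.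
have := indep_le_rk (proper_X_indep Xx) (proper_sub Xx).
have := rk_lt_dep matB X_dep; have := cardsD1 x X.
by rewrite rk_X xX; lia.
Qed.

Lemma card_X_del x : x \in X -> #|X :\ x| = r.-1.
Proof. by move=> xX; rewrite -card_X (cardsD1 x X) xX add1n. Qed.

(* Swapping one element of X for one outside X yields a basis; this uses
   that X is closed of rank r - 1 and that X minus a point is independent. *)
Lemma swap_X_basis x y : x \in X -> y \notin X -> y |: (X :\ x) \in B.
Proof.
move=> xX yX; case: (matB) => _ exch.
have [I /andP[iI IyX] cI] := rk_witness matB (y |: X).
have IB : I \in B.
  apply: indep_full => //; rewrite cI.
  case/andP: chX => /andP[_ _] /andP[/forallP/(_ y)]; rewrite inE yX /= rk_X.
  by lia.
have Xx : X :\ x \proper X by rewrite properD1.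
have [Y YB XxY] : exists2 Y, Y \in B & X :\ x \subset Y.
  by case/existsP: (proper_X_indep Xx) => Y /andP[]; exists Y.
have [u uXx eY] := basis_add_one matB r_gt0 YB XxY (card_X_del xX).
have uX : u \notin X.
  apply: contra X_notin_B => uX.
  have ux : u = x by apply/eqP; apply: contraNT uXx => ux; rewrite in_setD1 ux.
  by rewrite -(setD1K xX) -{1}ux -eY.
have [<-|uy] := eqVneq u y; first by rewrite -eY.
have uD : u \in Y :\: I.
  by rewrite inE eY setU11 andbT; apply: contra uX => /(subsetP IyX); rewrite in_setU1 (negbTE uy).
have [z] := exch Y I YB IB u uD; rewrite inE => /andP[zY zI].
rewrite eY setU1K //; have [->//|zy] := eqVneq z y.
have zx : z = x.
  move: zY (subsetP IyX z zI); rewrite eY !inE (negbTE zy) /= negb_or => /andP[_].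
  by case: eqVneq => // _ /= /negbTE ->.
by rewrite zx setD1K // (negbTE X_notin_B).
Qed.

Lemma cardIX_le S : S \in B -> #|S :&: X| <= r.-1.
Proof.
move=> SB; rewrite -rk_X; apply: indep_le_rk (subsetIr S X).
exact: indep_sub (basis_indep SB) (subsetIl S X).
Qed.

Lemma near_family_sub S : S \in near_family X -> S = X \/ S \in B.
Proof.
rewrite inE card_X => /andP[/eqP cS le].
have [eSX|ltSX] := eqVneq #|S :&: X| r.
  have SXX : S :&: X = X by apply/eqP; rewrite eqEcard subsetIr eSX card_X leqnn.
  by left; apply/eqP; rewrite eq_sym eqEcard -{1}SXX subsetIl cS card_X leqnn.
right; have cSX : #|S :&: X| = #|X|.-1.
  by have := subset_leq_card (subsetIr S X); rewrite card_X; lia.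
have X_gt0 : 0 < #|X| by rewrite card_X.
have [u [v [uX vX ->]]] := swap_shape X_gt0 (etrans cS (esym card_X)) cSX.
exact: swap_X_basis.
Qed.

Lemma basis_in_near S : S \in B -> r.-1 <= #|S :&: X| -> S \in near_family X.
Proof. by move=> SB le; rewrite inE (basis_card matB SB) card_X eqxx le. Qed.

Lemma exchange_pair B0 : B0 \in B -> #|B0 :&: X| < r.-1 ->
  exists y z, [/\ y \in B0 :\: X, z \in X :\: B0,
                  y |: (X :\ z) \in B & z |: (B0 :\ y) \in B].
Proof.
move=> B0B far; case: (matB) => _ exch.
have cB0X : 1 < #|B0 :\: X| by rewrite cardsD (basis_card matB B0B); lia.
have /set0Pn[y0 y0D] : B0 :\: X != set0 by rewrite -card_gt0; lia.
have /set0Pn[y yD] : (B0 :\: X) :\ y0 != set0.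
  by rewrite -card_gt0; have := cardsD1 y0 (B0 :\: X); rewrite y0D; lia.
have /set0Pn[x0 x0D] : X :\: B0 != set0.
  by rewrite -card_gt0 cardsD card_X setIC; lia.
move: y0D yD x0D; rewrite !inE => /andP[y0X y0B] /and3P[yy0 yX yB] /andP[x0B x0X].
have B2B := swap_X_basis x0X y0X.
have yD : y \in B0 :\: (y0 |: X :\ x0).
  by rewrite !inE yB (negbTE yy0) (negbTE yX) andbF.
have [z] := exch B0 _ B0B B2B y yD; rewrite !inE => /andP[zB0 zB2] C2B.
have zX : z \in X by move: zB2; case: eqVneq => [ez|_ /andP[]//]; rewrite ez y0B in zB0.
by exists y, z; rewrite !inE ?yB ?yX ?zX ?zB0; split => //; apply: swap_X_basis.
Qed.

(* If every basis meets X in at least r - 1 elements, then an independent set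
   has at most one element outside X, whence rk E <= |X :&: E| + 1. *)
Lemma rk_near_bound : (forall S, S \in B -> r.-1 <= #|S :&: X|) ->
  forall E, rk B E <= #|X :&: E| + 1.
Proof.
move=> near E; apply: rk_le => I /existsP[S /andP[SB IS]] IE.
have out_le : #|I :\: X| <= 1.
  apply: leq_trans (subset_leq_card (setSD X IS)) _.
  by rewrite cardsD (basis_card matB SB); have := near S SB; lia.
have in_le : #|I :&: X| <= #|X :&: E| by rewrite setIC subset_leq_card ?setIS.
by rewrite -(cardsID X I); lia.
Qed.

(* The content of a good partition used here: it forces a basis far from X.
   Otherwise X :&: E1 and X :&: E2 are proper, hence independent, subsets of
   X, small enough for (P2) to make their union X independent. *)
Lemma good_partition_far_basis E1 E2 : good_partition B E1 E2 ->
  exists2 B0, B0 \in B & #|B0 :&: X| < r.-1.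
Proof.
move=> [cover [disj [rk1 [rk2 [a1 [a2 [/andP[a1_gt0 a1_lt] /andP[a2_gt0 a2_lt] rk_sum indepP]]]]]]].
have [/existsP[B0 /andP[B0B far]]|/existsPn noFar] :=
  boolP [exists S, (S \in B) && (#|S :&: X| < r.-1)]; first by exists B0.
have near S : S \in B -> r.-1 <= #|S :&: X|.
  by move=> SB; move: (noFar S); rewrite SB -leqNgt.
have bound1 := rk_near_bound near E1; have bound2 := rk_near_bound near E2.
have split_X : (X :&: E1) :|: (X :&: E2) = X by rewrite -setIUr cover setIT.
have card_split : #|X :&: E1| + #|X :&: E2| = r.
  by rewrite -card_X -[in RHS]split_X cardsU -setIIr disj setI0 cards0 subn0.
have proper_part Ea Eb : Ea :&: Eb = set0 -> 0 < #|X :&: Eb| -> X :&: Ea \proper X.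
  move=> Dab /card_gt0P[e]; rewrite inE => /andP[eX eEb].
  rewrite properEneq subsetIl andbT; apply/eqP => XEa.
  have eEa : e \in Ea by move: eX; rewrite -XEa inE => /andP[].
  by have := in_set0 e; rewrite -Dab inE eEa eEb.
have meet1 : 0 < #|X :&: E1| by rewrite -(ltn_add2r 1) (leq_trans rk1 bound1).
have meet2 : 0 < #|X :&: E2| by rewrite -(ltn_add2r 1) (leq_trans rk2 bound2).
have indep1 : indep B (X :&: E1) by apply/proper_X_indep/(proper_part _ _ disj).
have indep2 : indep B (X :&: E2).
  by apply/proper_X_indep/(proper_part E2 E1); rewrite // setIC.
exfalso; apply: (negP X_dep); rewrite -split_X; apply: indepP; rewrite ?subsetIr //.
- by move: card_split bound2 rk_sum a2_gt0; lia.
- by move: card_split bound1 rk_sum a1_gt0; lia.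
Qed.
End CircuitHyperplane.

Import Order.TTheory GRing.Theory Num.Theory.
Local Open Scope ring_scope.

Section Polytope.
Variables (R : realFieldType) (n : nat).
Implicit Types (A : {set {set 'I_n}}) (S T : {set 'I_n}) (lam : {set 'I_n} -> R).
Implicit Types (x : point R n) (a : 'I_n -> R).

Definition convex_rep A lam x :=
  [/\ forall S, 0 <= lam S, \sum_(S in A) lam S = 1 &
      forall i, x i = \sum_(S in A) lam S * (i \in S)%:R].

Definition vertex S : point R n := fun i => (i \in S)%:R.

Definition lin a x := \sum_i a i * x i.

Lemma sum_delta A T (g : {set 'I_n} -> R) :
  T \in A -> \sum_(S in A) (S == T)%:R * g S = g T.
Proof.
move=> TA; rewrite (bigD1 T) //= eqxx mul1r big1 ?addr0 // => S /andP[_ /negbTE ->].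
by rewrite mul0r.
Qed.

Lemma vertex_rep A T : T \in A -> convex_rep A (fun S => (S == T)%:R) (vertex T).
Proof.
move=> TA; split=> [S|| i]; first by case: (S == T).
  by rewrite -[RHS](sum_delta (fun=> 1) TA); apply: eq_bigr => S _; rewrite mulr1.
by rewrite sum_delta.
Qed.

Lemma vertex_in A T : T \in A -> mpolytope R A (vertex T).
Proof. by move=> TA; exists (fun S => (S == T)%:R); apply: vertex_rep. Qed.

Lemma mpolytope_restrict A A2 lam x : convex_rep A lam x ->
  (forall S, S \in A -> lam S != 0 -> S \in A2) -> mpolytope R A2 x.
Proof.
move=> [lam_ge0 lam_sum lam_x] supp.
pose lam2 S := if S \in A then lam S else 0.
have restrict (g : {set 'I_n} -> R) :
    \sum_(S in A2) lam2 S * g S = \sum_(S in A) lam S * g S.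
  rewrite big_mkcond [RHS]big_mkcond; apply: eq_bigr => S _; rewrite /lam2.
  case SA: (S \in A); case SA2: (S \in A2); rewrite ?mul0r //.
  by have [->|/(supp S SA)] := eqVneq (lam S) 0; rewrite ?mul0r // SA2.
exists lam2; split=> [S|| i]; first by rewrite /lam2; case: ifP.
  have := restrict (fun=> 1); under eq_bigr => S _ do rewrite mulr1.
  by move=> ->; under eq_bigr => S _ do rewrite mulr1.
by rewrite lam_x restrict.
Qed.

Lemma mpolytope_sub A A2 x : A \subset A2 -> mpolytope R A x -> mpolytope R A2 x.
Proof. by move=> sA [lam rep]; apply: (mpolytope_restrict rep) => S SA _; apply/(subsetP sA). Qed.

Lemma lin_vertex S T : lin (vertex T) (vertex S) = #|S :&: T|%:R.
Proof.
rewrite /lin -sum1_card natr_sum [RHS]big_mkcond /=; apply: eq_bigr => i _.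
by rewrite /vertex inE; case: (i \in S); case: (i \in T); rewrite ?mul0r ?mul1r.
Qed.

Lemma lin_rep A lam x a : convex_rep A lam x ->
  lin a x = \sum_(S in A) lam S * lin a (vertex S).
Proof.
case=> _ _ lam_x; rewrite /lin.
under eq_bigr => i _ do rewrite lam_x mulr_sumr.
rewrite exchange_big /=; apply: eq_bigr => S _; rewrite mulr_sumr.
by apply: eq_bigr => i _; rewrite mulrCA.
Qed.

Lemma lin_gap A lam x a b : convex_rep A lam x ->
  b - lin a x = \sum_(S in A) lam S * (b - lin a (vertex S)).
Proof.
move=> rep; have [_ lam_sum _] := rep.
rewrite (lin_rep a rep) {1}(_ : b = \sum_(S in A) lam S * b); last first.
  by rewrite -mulr_suml lam_sum mul1r.
by rewrite -sumrB; apply: eq_bigr => S _; rewrite mulrBr.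
Qed.

Lemma lin_le A a b x : (forall S, S \in A -> lin a (vertex S) <= b) ->
  mpolytope R A x -> lin a x <= b.
Proof.
move=> vle [lam rep]; rewrite -subr_ge0 (lin_gap _ _ rep); apply: sumr_ge0 => S SA.
by case: rep => lam_ge0 _ _; rewrite mulr_ge0 // subr_ge0 vle.
Qed.

Lemma lin_opp a x : lin (fun i => - a i) x = - lin a x.
Proof. by rewrite /lin -sumrN; apply: eq_bigr => i _; rewrite mulNr. Qed.

Lemma lin_ge A a b x : (forall S, S \in A -> b <= lin a (vertex S)) ->
  mpolytope R A x -> b <= lin a x.
Proof.
move=> vge Px; rewrite -lerN2 -lin_opp; apply: lin_le Px => S SA.
by rewrite lin_opp lerN2 vge.
Qed.

Lemma lin_tight A a b lam x : (forall S, S \in A -> lin a (vertex S) <= b) ->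
  convex_rep A lam x -> lin a x = b ->
  forall S, S \in A -> lam S != 0 -> lin a (vertex S) = b.
Proof.
move=> vle rep tight S SA; have [lam_ge0 _ _] := rep.
have gap0 : \sum_(S in A) lam S * (b - lin a (vertex S)) = 0.
  by rewrite -(lin_gap _ _ rep) tight subrr.
have gap_ge0 S' : S' \in A -> 0 <= lam S' * (b - lin a (vertex S')).
  by move=> S'A; rewrite mulr_ge0 // subr_ge0 vle.
move/eqP: (psumr_eq0P gap_ge0 gap0 SA).
by rewrite mulf_eq0 subr_eq0 => /orP[/eqP->|/eqP<-]; rewrite ?eqxx.
Qed.

Lemma lower_face A1 A2 a b :
  (forall S, S \in A1 -> lin a (vertex S) <= b) ->
  (forall S, S \in A2 -> b <= lin a (vertex S)) ->
  (forall S, S \in A1 -> lin a (vertex S) = b -> S \in A2) ->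
  face (fun x => mpolytope R A1 x /\ mpolytope R A2 x) (mpolytope R A1).
Proof.
move=> le1 ge2 tight12; exists a, b; split=> [x|x]; first exact: lin_le.
split=> [[P1x P2x]|[[lam rep] tight]].
  by split=> //; apply/eqP; rewrite eq_le (lin_le le1) // (lin_ge ge2).
split; first by exists lam.
apply: (mpolytope_restrict rep) => S SA nz.
exact/tight12/(lin_tight le1 rep tight).
Qed.

Lemma upper_face A1 A2 a b :
  (forall S, S \in A1 -> lin a (vertex S) <= b) ->
  (forall S, S \in A2 -> b <= lin a (vertex S)) ->
  (forall S, S \in A2 -> lin a (vertex S) = b -> S \in A1) ->
  face (fun x => mpolytope R A1 x /\ mpolytope R A2 x) (mpolytope R A2).
Proof.
move=> le1 ge2 tight21.
have [||| a' [b' [le' face']]] := @lower_face A2 A1 (fun i => - a i) (- b).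
- by move=> S SA; rewrite lin_opp lerN2 ge2.
- by move=> S SA; rewrite lin_opp lerN2 le1.
- by move=> S SA; rewrite lin_opp => /oppr_inj; apply: tight21.
exists a', b'; split=> // x; split=> [[P1x P2x]|/face' []]; last by split.
by apply/face'.
Qed.

Definition transfer lam (mu : R) C1 C2 D1 D2 S :=
  lam S + mu * ((S == C1)%:R + (S == C2)%:R - (S == D1)%:R - (S == D2)%:R).

Lemma transfer_sum A lam mu C1 C2 D1 D2 (g : {set 'I_n} -> R) :
  [/\ C1 \in A, C2 \in A, D1 \in A & D2 \in A] ->
  \sum_(S in A) transfer lam mu C1 C2 D1 D2 S * g S =
  \sum_(S in A) lam S * g S + mu * (g C1 + g C2 - g D1 - g D2).
Proof.
case=> C1A C2A D1A D2A; rewrite /transfer.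
under eq_bigr => S _ do rewrite mulrDl -mulrA !mulrBl mulrDl.
by rewrite big_split /= -mulr_sumr !sumrB big_split /= !sum_delta.
Qed.

Lemma transfer_out lam mu C1 C2 D1 D2 S : S != C1 -> S != C2 ->
  transfer lam mu C1 C2 D1 D2 S = lam S - mu * ((S == D1)%:R + (S == D2)%:R).
Proof.
by move=> /negbTE SC1 /negbTE SC2; rewrite /transfer SC1 SC2 add0r sub0r -opprD mulrN.
Qed.

Lemma transfer_rep A lam x mu C1 C2 D1 D2 : convex_rep A lam x ->
  [/\ C1 \in A, C2 \in A, D1 \in A & D2 \in A] -> D1 != D2 ->
  0 <= mu -> mu <= lam D1 -> mu <= lam D2 ->
  (forall i, (i \in C1) + (i \in C2) = (i \in D1) + (i \in D2))%N ->
  convex_rep A (transfer lam mu C1 C2 D1 D2) x.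
Proof.
move=> [lam_ge0 lam_sum lam_x] inA D12 mu_ge0 muD1 muD2 same_multiset.
split=> [S|| i].
- have b_ge0 (b : bool) : 0 <= b%:R :> R by case: b.
  move: (b_ge0 (S == C1)) (b_ge0 (S == C2)); rewrite /transfer.
  have [->|nD1] := eqVneq S D1.
    by rewrite (negbTE D12) mulr1n mulr0n; nra.
  have [->|nD2] := eqVneq S D2; first by rewrite mulr1n mulr0n; nra.
  by rewrite !mulr0n; have := lam_ge0 S; nra.
- have := transfer_sum lam mu (fun=> 1) inA.
  under eq_bigr => S _ do rewrite mulr1.
  by move=> ->; under eq_bigr => S _ do rewrite mulr1; rewrite lam_sum addrK subrr mulr0 addr0.
- rewrite transfer_sum // -lam_x -addrA -opprD -!natrD same_multiset.
  by rewrite subrr mulr0 addr0.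
Qed.
End Polytope.

Section NormalForm.
Variables (R : realFieldType) (n : nat) (B : {set {set 'I_n}}) (X : {set 'I_n}).
Hypotheses (matB : is_matroid B) (chX : circuit_hyperplane B X).
Local Notation r := (mrank B).
Hypothesis r_gt0 : (0 < r)%N.
Local Notation M' := (relaxation B X).
Implicit Types (S : {set 'I_n}) (lam : {set 'I_n} -> R) (x : point R n).

Definition deficiency S := (r.-1 - #|S :&: X|)%N.

Definition support_deficiency lam := (\sum_(S in B | lam S != 0%R) deficiency S)%N.

Lemma support_deficiency_lt lam lam' B0 C1 C2 :
  B0 \in B -> C2 \in B -> lam B0 != 0 -> lam' B0 = 0 ->
  deficiency C1 = 0%N -> (deficiency C2 < deficiency B0)%N ->
  (forall S, S \in B -> S != B0 -> S != C1 -> S != C2 -> lam' S = lam S) ->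
  (support_deficiency lam' < support_deficiency lam)%N.
Proof.
move=> B0B C2B lamB0 lam'B0 dC1 dC2 same.
have C2B0 : C2 != B0 by apply: contraTneq dC2 => ->; rewrite ltnn.
have C2in : (C2 \in B) && (C2 != B0) by rewrite C2B C2B0.
rewrite /support_deficiency !big_mkcondr (bigD1 B0) // [X in (_ < X)%N](bigD1 B0) //=.
rewrite (bigD1 C2 C2in) [X in (_ < _ + X)%N](bigD1 C2 C2in) /= lam'B0 eqxx lamB0 /=.
rewrite add0n addnCA; apply: (leq_trans _ (leq_addl _ _)); rewrite -addSn.
apply: leq_add; first by case: ifP => _ //; apply: leq_ltn_trans dC2.
apply: leq_sum => S /andP[/andP[SB SB0] SC2].
have [->|SC1] := eqVneq S C1; first by rewrite dC1; case: ifP.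
by rewrite same.
Qed.

(* One exchange step: if both X and a deficient basis B0 carry weight, move
   as much weight as possible from X and B0 onto the bases C1, C2 of
   exchange_pair. *)
Lemma exchange_step lam x B0 : convex_rep M' lam x -> lam X != 0 ->
  B0 \in B -> (0 < deficiency B0)%N -> lam B0 != 0 ->
  exists2 lam', convex_rep M' lam' x &
    lam' X = 0 \/ (support_deficiency lam' < support_deficiency lam)%N.
Proof.
move=> rep lamX B0B dB0 lamB0; have [lam_ge0 _ _] := rep.
have far : (#|B0 :&: X| < r.-1)%N by rewrite /deficiency in dB0; lia.
have [y [z [yD zD C1B C2B]]] := exchange_pair matB chX r_gt0 B0B far.
set C1 := y |: (X :\ z) in C1B; set C2 := z |: (B0 :\ y) in C2B.
have yX : y \notin X by move: yD; rewrite inE => /andP[].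
have [zB0 zX] : z \notin B0 /\ z \in X by move: zD; rewrite inE => /andP[].
have dC1 : deficiency C1 = 0%N.
  rewrite /deficiency; have -> : C1 :&: X = X :\ z.
    apply/setP=> i; rewrite !inE; case: eqVneq => [->|_] /=; first by rewrite (negbTE yX) andbF.
    by rewrite -andbA andbb.
  by rewrite (card_X_del matB chX r_gt0 zX) subnn.
have dC2 : (deficiency C2 < deficiency B0)%N.
  rewrite /deficiency; have -> : C2 :&: X = z |: (B0 :&: X).
    apply/setP=> i; rewrite !inE; case: eqVneq => [->|] //= _.
    by case: eqVneq => [->|] //=; rewrite (negbTE yX) andbF.
  by rewrite cardsU1 inE (negbTE zB0) add1n subnS ltn_predL.
have XB := X_notin_B chX.
have [XC1 XC2 XB0] : [/\ X != C1, X != C2 & X != B0].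
  by split; apply: contraNneq XB => ->.
have B0C1 : B0 != C1 by apply: contraTneq dB0 => ->; rewrite dC1.
have B0C2 : B0 != C2 by apply: contraNneq zB0 => ->; rewrite setU11.
pose mu := if lam X <= lam B0 then lam X else lam B0.
pose lam' := transfer lam mu C1 C2 X B0.
have inM' : [/\ C1 \in M', C2 \in M', X \in M' & B0 \in M'].
  by split; rewrite ?setU11 // basis_in_relaxation.
have rep' : convex_rep M' lam' x.
  apply: transfer_rep inM' XB0 _ _ _ _ => //.
  - by rewrite /mu; case: ifP.
  - by rewrite /mu; case: ifP => // /negbT; rewrite -ltNge => /ltW.
  - by rewrite /mu; case: ifP.
  - by move=> i; rewrite swap_pair_multiset.
exists lam' => //.
have [le|gt] := boolP (lam X <= lam B0); [left | right].
  by rewrite /lam' transfer_out // eqxx (negbTE XB0) /mu le addr0 mulr1 subrr.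
apply: (support_deficiency_lt B0B C2B lamB0 _ dC1 dC2).
  by rewrite /lam' transfer_out // eqxx eq_sym (negbTE XB0) /mu (negbTE gt) add0r mulr1 subrr.
move=> S SB SB0 SC1 SC2; rewrite /lam' transfer_out // (negbTE SB0).
have -> : (S == X) = false by apply: contraNF XB => /eqP <-.
by rewrite addr0 mulr0 subr0.
Qed.

Lemma normal_form lam x : convex_rep M' lam x ->
  exists2 lam', convex_rep M' lam' x &
    lam' X = 0 \/ forall S, S \in B -> (0 < deficiency S)%N -> lam' S = 0.
Proof.
have [k] := ubnP (support_deficiency lam); elim: k lam => // k IH lam lt_k rep.
have [lamX0|lamX] := eqVneq (lam X) 0; first by exists lam => //; left.
have [/existsP[B0 /and3P[B0B dB0 lamB0]]|/existsPn noFar] :=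
  boolP [exists S, [&& S \in B, (0 < deficiency S)%N & lam S != 0]].
  have [lam' rep' [lam'X0|lt']] := exchange_step rep lamX B0B dB0 lamB0.
    by exists lam' => //; left.
  by apply: IH rep'; apply: leq_trans lt' _.
exists lam => //; right=> S SB dS; apply/eqP.
by move: (noFar S); rewrite SB dS negbK.
Qed.

Lemma relaxation_union x :
  mpolytope R M' x <-> mpolytope R B x \/ mpolytope R (near_family X) x.
Proof.
split=> [[lam rep]|[]]; last first.
- apply: mpolytope_sub; apply/subsetP=> S /(near_family_sub matB chX r_gt0)[->|].
    exact: setU11.
  exact: basis_in_relaxation.
- by apply: mpolytope_sub; apply: subsetUr.
have [lam' rep' [lam'X0|noFar]] := normal_form rep.
  left; apply: (mpolytope_restrict rep') => S; rewrite in_setU1.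
  by case/orP=> [/eqP->|//]; rewrite lam'X0 eqxx.
right; apply: (mpolytope_restrict rep') => S; rewrite in_setU1 => /orP[/eqP-> _|SB nz].
  by rewrite inE eqxx setIid leq_pred.
apply: (basis_in_near matB chX r_gt0 SB); rewrite leqNgt; apply: contra nz => lt.
by apply/eqP/noFar; rewrite // /deficiency subn_gt0.
Qed.
End NormalForm.

Unset Implicit Arguments.
Unset Strict Implicit.

Theorem corollary2 (R : realFieldType) (n : nat) (B : {set {set 'I_n}})
  (E1 E2 : {set 'I_n}) (X : {set 'I_n}) :
  is_matroid B -> good_partition B E1 E2 -> circuit_hyperplane B X ->
  has_nontrivial_hyperplane_split R (relaxation B X).
Proof.
move=> matB gp chX.
have r_gt0 : (0 < mrank B)%N.
  by case: gp => _ [_ [rk1 _]]; apply: leq_trans (rk_le_r B E1); apply: ltnW.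
pose K : R := (mrank B).-1%:R.
have below S : S \in B -> lin (vertex R X) (vertex R S) <= K.
  by move=> SB; rewrite lin_vertex ler_nat (cardIX_le chX SB).
have above S : S \in near_family X -> K <= lin (vertex R X) (vertex R S).
  by rewrite inE lin_vertex ler_nat (card_X matB chX r_gt0) => /andP[].
exists B, (near_family X); split; [split|split].
- exact: matB.
- exact: near_family_matroid.
- exact: relaxation_union.
- apply: lower_face below above _ => S SB.
  rewrite lin_vertex => /eqP; rewrite eqr_nat => /eqP tight.
  by apply: (basis_in_near matB chX r_gt0 SB); rewrite tight.
- apply: upper_face below above _ => S /(near_family_sub matB chX r_gt0)[->|//].
  by rewrite lin_vertex setIid (card_X matB chX r_gt0) => /eqP; rewrite eqr_nat; lia.
- move=> /(_ (vertex R X)) [_ /(_ (vertex_in R (setU11 X B)))] /(lin_le below).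
  by rewrite lin_vertex setIid (card_X matB chX r_gt0) ler_nat; lia.
- have [B0 B0B far] := good_partition_far_basis matB chX r_gt0 gp.
  move=> /(_ (vertex R B0)) [_ /(_ (vertex_in R (basis_in_relaxation X B0B)))].
  by move/(lin_ge above); rewrite lin_vertex ler_nat leqNgt far.
Qed.
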